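(* The variety $\mathsf{V}(S_{(4,430)})$ is the ai-semiring variety defined by the identities $xy\approx yx$, $x^4\approx x^3$, $x^3\approx x^2+x$, $x+xy\approx x+x^2y$, $x^2+y^2\approx x^2+y^2+xy$, $x_1x_2x_3\approx x_1x_2x_3+x_1x_2x_3x_4$.
   Context: An ai-semiring is an algebra $(S,+,\cdot)$ with $(S,+)$ a semilattice, $(S,\cdot)$ a semigroup, and both distributive laws. $\mathsf{V}(S)$ is the variety generated by $S$; ''the ai-semiring variety defined by identities $\Sigma$'' is the class of all ai-semirings satisfying $\Sigma$. $S_{(4,430)}$ has carrier $\{1,2,3,4\}$; addition: $x+x=x$, $2+x=x$, $1+x=1$ for all $x$, $3+4=1$; multiplication (row $a$, column $b$ gives $a\cdot b$): row $1$: $1,2,1,1$; row $2$: $2,2,2,2$; row $3$: $1,2,1,1$; row $4$: $1,2,1,3$. *)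

Record aisemiring := AISemiring {
  car :> Type;
  sadd : car -> car -> car;
  smul : car -> car -> car;
  sadd_assoc : forall x y z, sadd x (sadd y z) = sadd (sadd x y) z;
  sadd_comm : forall x y, sadd x y = sadd y x;
  sadd_idem : forall x, sadd x x = x;
  smul_assoc : forall x y z, smul x (smul y z) = smul (smul x y) z;
  smul_distl : forall x y z, smul x (sadd y z) = sadd (smul x y) (smul x z);
  smul_distr : forall x y z, smul (sadd x y) z = sadd (smul x z) (smul y z)
}.

Inductive term : Type :=
| Var : nat -> term
| Add : term -> term -> term
| Mul : term -> term -> term.

Fixpoint eval (A : aisemiring) (v : nat -> A) (t : term) : A :=
  match t with
  | Var n => v n
  | Add s u => sadd A (eval A v s) (eval A v u)
  | Mul s u => smul A (eval A v s) (eval A v u)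
  end.

Definition holds (A : aisemiring) (u v : term) : Prop :=
  forall val : nat -> A, eval A val u = eval A val v.

(** Membership in the variety V(S) generated by S: by Birkhoff's HSP theorem,
    V(S) is exactly the class of algebras satisfying every identity of S. *)
Definition in_variety_gen (S A : aisemiring) : Prop :=
  forall u v : term, holds S u v -> holds A u v.

Inductive E4 : Type := e1 | e2 | e3 | e4.

Definition add4 (a b : E4) : E4 :=
  match a, b with
  | e1, _ => e1
  | _, e1 => e1
  | e2, y => y
  | x, e2 => x
  | e3, e3 => e3
  | e4, e4 => e4
  | e3, e4 => e1
  | e4, e3 => e1
  end.

Definition mul4 (a b : E4) : E4 :=
  match a, b with
  | e2, _ => e2
  | _, e2 => e2
  | e4, e4 => e3
  | _, _ => e1
  end.

Lemma add4_assoc x y z : add4 x (add4 y z) = add4 (add4 x y) z.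
Proof. destruct x, y, z; reflexivity. Qed.
Lemma add4_comm x y : add4 x y = add4 y x.
Proof. destruct x, y; reflexivity. Qed.
Lemma add4_idem x : add4 x x = x.
Proof. destruct x; reflexivity. Qed.
Lemma mul4_assoc x y z : mul4 x (mul4 y z) = mul4 (mul4 x y) z.
Proof. destruct x, y, z; reflexivity. Qed.
Lemma mul4_distl x y z : mul4 x (add4 y z) = add4 (mul4 x y) (mul4 x z).
Proof. destruct x, y, z; reflexivity. Qed.
Lemma mul4_distr x y z : mul4 (add4 x y) z = add4 (mul4 x z) (mul4 y z).
Proof. destruct x, y, z; reflexivity. Qed.

Definition S4_430 : aisemiring :=
  AISemiring E4 add4 mul4 add4_assoc add4_comm add4_idem
             mul4_assoc mul4_distl mul4_distr.

(** The identities of the statement; x = Var 0, y = Var 1,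
    x1..x4 = Var 0..Var 3; products are left-bracketed (irrelevant by
    associativity). *)
Definition x := Var 0.
Definition y := Var 1.

Definition Sigma (A : aisemiring) : Prop :=
  holds A (Mul x y) (Mul y x) /\
  holds A (Mul (Mul (Mul x x) x) x) (Mul (Mul x x) x) /\
  holds A (Mul (Mul x x) x) (Add (Mul x x) x) /\
  holds A (Add x (Mul x y)) (Add x (Mul (Mul x x) y)) /\
  holds A (Add (Mul x x) (Mul y y)) (Add (Add (Mul x x) (Mul y y)) (Mul x y)) /\
  holds A (Mul (Mul (Var 0) (Var 1)) (Var 2))
          (Add (Mul (Mul (Var 0) (Var 1)) (Var 2))
               (Mul (Mul (Mul (Var 0) (Var 1)) (Var 2)) (Var 3))).

From Pilot Require Import Defs.
From Stdlib Require Import Arith List Lia Classical.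
Import ListNotations.

(* Both sides of an identity u = v of S_(4,430) expand into sums of words.  In a
   model of Sigma, multiplication is commutative, x <= x^3 = x^2 + x, and a word
   of length at least three absorbs its own letters and is absorbed by its
   multiples, so it only depends on its set of letters.  Hence a word m of v
   lies below u as soon as u contains one of a few patterns built from the
   letters of m.  Conversely, when no pattern occurs, a valuation into
   S_(4,430) sending the letters of m to 3 or 4 and every other variable to the
   multiplicative zero 2 separates m from u. *)

Local Infix "⊕" := (sadd _) (at level 50, left associativity).
Local Infix "⊗" := (smul _) (at level 40, left associativity).

Definition ai_le (A : aisemiring) (a b : A) : Prop := a ⊕ b = b.
Local Notation "a ≼ b" := (ai_le _ a b) (at level 70).

Section Order.
Variable A : aisemiring.
Implicit Types a b c : A.

Lemma ai_le_refl a : a ≼ a.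
Proof. apply sadd_idem. Qed.

Lemma ai_le_trans a b c : a ≼ b -> b ≼ c -> a ≼ c.
Proof. unfold ai_le; intros Hab Hbc. rewrite <- Hbc, sadd_assoc, Hab. reflexivity. Qed.

Lemma ai_le_antisym a b : a ≼ b -> b ≼ a -> a = b.
Proof. unfold ai_le; intros Hab Hba. rewrite <- Hba, sadd_comm. exact Hab. Qed.

Lemma ai_le_addl a b : a ≼ a ⊕ b.
Proof. unfold ai_le. rewrite sadd_assoc, sadd_idem. reflexivity. Qed.

Lemma ai_le_addr a b : b ≼ a ⊕ b.
Proof. rewrite sadd_comm. apply ai_le_addl. Qed.

Lemma ai_le_join a b c : a ≼ c -> b ≼ c -> a ⊕ b ≼ c.
Proof. unfold ai_le; intros Hac Hbc. rewrite <- sadd_assoc, Hbc, Hac. reflexivity. Qed.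

Lemma ai_le_mulr a b c : a ≼ b -> a ⊗ c ≼ b ⊗ c.
Proof. unfold ai_le; intros Hab. rewrite <- smul_distr, Hab. reflexivity. Qed.

End Order.

Definition word := list nat.

Fixpoint monomials (t : term) : list word :=
  match t with
  | Var n => [[n]]
  | Defs.Add s u => monomials s ++ monomials u
  | Mul s u => flat_map (fun p => map (app p) (monomials u)) (monomials s)
  end.

Lemma monomials_neq_nil t : monomials t <> [].
Proof.
  induction t as [n|s IHs u IHu|s IHs u IHu]; simpl.
  - discriminate.
  - destruct (monomials s); [contradiction | discriminate].
  - destruct (monomials s) as [|p P]; [contradiction|].
    destruct (monomials u); [contradiction | discriminate].
Qed.

Lemma monomials_word_neq_nil t w : In w (monomials t) -> w <> [].
Proof.
  revert w; induction t as [n|s IHs u IHu|s IHs u IHu]; simpl; intros w Hw.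
  - destruct Hw as [<-|[]]; discriminate.
  - apply in_app_or in Hw as [Hw|Hw]; auto.
  - apply in_flat_map in Hw as [p [Hp Hw]]. apply in_map_iff in Hw as [q [<- _]].
    destruct p; [exfalso; exact (IHs _ Hp eq_refl) | discriminate].
Qed.

Section Polynomials.
Variable A : aisemiring.
Variable v : nat -> A.

(* Words and polynomials are nonempty; the value [v 0] of the empty list is junk. *)
Fixpoint eval_word (w : word) : A :=
  match w with
  | [] => v 0
  | [n] => v n
  | n :: w' => v n ⊗ eval_word w'
  end.

Fixpoint eval_poly (P : list word) : A :=
  match P with
  | [] => v 0
  | [w] => eval_word w
  | w :: P' => eval_word w ⊕ eval_poly P'
  end.

Lemma eval_word_cons n w : w <> [] -> eval_word (n :: w) = v n ⊗ eval_word w.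
Proof. destruct w; [contradiction | reflexivity]. Qed.

Lemma eval_poly_cons w P : P <> [] -> eval_poly (w :: P) = eval_word w ⊕ eval_poly P.
Proof. destruct P; [contradiction | reflexivity]. Qed.

Lemma eval_word_app w1 w2 : w1 <> [] -> w2 <> [] ->
  eval_word (w1 ++ w2) = eval_word w1 ⊗ eval_word w2.
Proof.
  induction w1 as [|n w1 IH]; intros H1 H2; [contradiction|].
  destruct w1 as [|k w1]; [apply eval_word_cons; exact H2|].
  rewrite <- app_comm_cons, eval_word_cons, IH by (discriminate || assumption).
  rewrite (eval_word_cons n) by discriminate. apply smul_assoc.
Qed.

Lemma eval_poly_app P1 P2 : P1 <> [] -> P2 <> [] ->
  eval_poly (P1 ++ P2) = eval_poly P1 ⊕ eval_poly P2.
Proof.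
  induction P1 as [|w P1 IH]; intros H1 H2; [contradiction|].
  destruct P1 as [|w' P1]; [apply eval_poly_cons; exact H2|].
  rewrite <- app_comm_cons, eval_poly_cons, IH by (discriminate || assumption).
  rewrite (eval_poly_cons w) by discriminate. apply sadd_assoc.
Qed.

Lemma eval_poly_map_app w Q : w <> [] -> Q <> [] -> (forall q, In q Q -> q <> []) ->
  eval_poly (map (app w) Q) = eval_word w ⊗ eval_poly Q.
Proof.
  intros Hw. induction Q as [|q Q IH]; intros HQ Hq; [contradiction|].
  assert (Hq0 : q <> []) by (apply Hq; left; reflexivity).
  destruct Q as [|q' Q]; [apply eval_word_app; assumption|].
  rewrite map_cons, eval_poly_cons, IH, eval_word_app, (eval_poly_cons q)
    by (discriminate || assumption || (intros; apply Hq; right; assumption)).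
  symmetry; apply smul_distl.
Qed.

Lemma eval_poly_product P Q : P <> [] -> Q <> [] ->
  (forall p, In p P -> p <> []) -> (forall q, In q Q -> q <> []) ->
  eval_poly (flat_map (fun p => map (app p) Q) P) = eval_poly P ⊗ eval_poly Q.
Proof.
  intros HP HQ Hp Hq. induction P as [|p P IH]; [contradiction|].
  assert (Hp0 : p <> []) by (apply Hp; left; reflexivity).
  assert (HpQ : map (app p) Q <> []) by (destruct Q; [contradiction | discriminate]).
  simpl flat_map. destruct P as [|p' P].
  - rewrite app_nil_r. apply eval_poly_map_app; assumption.
  - assert (HP' : flat_map (fun p => map (app p) Q) (p' :: P) <> []).
    { simpl; destruct Q; [contradiction | discriminate]. }
    rewrite eval_poly_app, eval_poly_map_app, IH, (eval_poly_cons p)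
      by (discriminate || assumption || (intros; apply Hp; right; assumption)).
    symmetry; apply smul_distr.
Qed.

Lemma eval_monomials t : eval A v t = eval_poly (monomials t).
Proof.
  induction t as [n|s IHs u IHu|s IHs u IHu]; simpl.
  - reflexivity.
  - rewrite eval_poly_app by apply monomials_neq_nil. congruence.
  - rewrite eval_poly_product
      by (apply monomials_neq_nil || apply monomials_word_neq_nil). congruence.
Qed.

Lemma eval_poly_ge P w : In w P -> eval_word w ≼ eval_poly P.
Proof.
  induction P as [|w' P IH]; intros Hw; [destruct Hw|].
  destruct P as [|w'' P].
  - destruct Hw as [<-|[]]. apply ai_le_refl.
  - rewrite eval_poly_cons by discriminate. destruct Hw as [<-|Hw].
    + apply ai_le_addl.
    + eapply ai_le_trans; [apply IH, Hw | apply ai_le_addr].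
Qed.

Lemma eval_poly_le P a : P <> [] -> (forall w, In w P -> eval_word w ≼ a) -> eval_poly P ≼ a.
Proof.
  induction P as [|w P IH]; intros HP Hw; [contradiction|].
  destruct P as [|w' P]; [apply Hw; left; reflexivity|].
  rewrite eval_poly_cons by discriminate. apply ai_le_join.
  - apply Hw; left; reflexivity.
  - apply IH; [discriminate | intros; apply Hw; right; assumption].
Qed.

End Polynomials.

Section SigmaLaws.
Variable A : aisemiring.
Hypothesis HS : Sigma A.
Implicit Types a b c d : A.

Lemma sigma_mulC a b : a ⊗ b = b ⊗ a.
Proof. destruct HS as [H _]. exact (H (fun n => nth n [a; b] a)). Qed.

Lemma sigma_cube a : a ⊗ a ⊗ a = a ⊗ a ⊕ a.
Proof. destruct HS as (_ & _ & H & _). exact (H (fun n => nth n [a] a)). Qed.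

Lemma sigma_absorb a b : a ⊕ a ⊗ b = a ⊕ a ⊗ a ⊗ b.
Proof. destruct HS as (_ & _ & _ & H & _). exact (H (fun n => nth n [a; b] a)). Qed.

Lemma sigma_le_mul_squares a b : a ⊗ b ≼ a ⊗ a ⊕ b ⊗ b.
Proof.
  destruct HS as (_ & _ & _ & _ & H & _). unfold ai_le.
  rewrite sadd_comm. symmetry. exact (H (fun n => nth n [a; b] a)).
Qed.

Lemma sigma_le_mul_tail a b c d : a ⊗ b ⊗ c ⊗ d ≼ a ⊗ b ⊗ c.
Proof.
  destruct HS as (_ & _ & _ & _ & _ & H). unfold ai_le.
  rewrite sadd_comm. symmetry. exact (H (fun n => nth n [a; b; c; d] a)).
Qed.

Lemma sigma_le_cube a : a ≼ a ⊗ a ⊗ a.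
Proof. rewrite sigma_cube. apply ai_le_addr. Qed.

Lemma sigma_le_mul_repeat (z r : A) : z ⊗ r ≼ z ⊗ r ⊗ z.
Proof.
  eapply ai_le_trans; [apply ai_le_mulr, (sigma_le_cube z)|].
  replace (z ⊗ z ⊗ z ⊗ r) with (z ⊗ r ⊗ z ⊗ z); [apply sigma_le_mul_tail|].
  rewrite <- !smul_assoc. f_equal. rewrite (sigma_mulC r), smul_assoc. reflexivity.
Qed.

Section Words.
Variable v : nat -> A.
Local Notation eval_word := (eval_word A v).

Lemma eval_word_middle w1 z w2 : w1 ++ w2 <> [] ->
  eval_word (w1 ++ z :: w2) = v z ⊗ eval_word (w1 ++ w2).
Proof.
  induction w1 as [|n w1 IH]; intros Hw; [apply eval_word_cons, Hw|].
  rewrite <- !app_comm_cons, eval_word_cons by (destruct w1; discriminate).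
  destruct (w1 ++ w2) as [|k w] eqn:E.
  - apply app_eq_nil in E as [-> ->]. apply sigma_mulC.
  - rewrite IH, (eval_word_cons _ _ n), !smul_assoc, (sigma_mulC (v n))
      by (rewrite ?E; discriminate).
    reflexivity.
Qed.

Lemma eval_word_long_mul w a : 3 <= length w -> eval_word w ⊗ a ≼ eval_word w.
Proof.
  destruct w as [|n [|k [|j w]]]; simpl length; intros Hw; try lia.
  rewrite !eval_word_cons, !smul_assoc by discriminate. apply sigma_le_mul_tail.
Qed.

Lemma eval_word_le_snoc w z : 2 <= length w -> In z w -> eval_word w ≼ eval_word (w ++ [z]).
Proof.
  intros Hw Hz. assert (Hw0 : w <> []) by (destruct w; simpl in Hw; [lia | discriminate]).
  rewrite eval_word_app by (assumption || discriminate).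
  apply in_split in Hz as [w1 [w2 ->]].
  rewrite eval_word_middle; [apply sigma_le_mul_repeat|].
  rewrite length_app in Hw; simpl in Hw.
  destruct w1, w2; simpl in *; (lia || discriminate).
Qed.

Lemma eval_word_le_app w p : 2 <= length w -> incl p w -> eval_word w ≼ eval_word (w ++ p).
Proof.
  revert w; induction p as [|z p IH]; intros w Hw Hp.
  - rewrite app_nil_r. apply ai_le_refl.
  - replace (w ++ z :: p) with ((w ++ [z]) ++ p) by (rewrite <- app_assoc; reflexivity).
    eapply ai_le_trans; [apply eval_word_le_snoc; [assumption | apply Hp; left; reflexivity]|].
    apply IH.
    + rewrite length_app; lia.
    + intros n Hn. apply in_or_app. left. apply Hp. right. exact Hn.
Qed.

Lemma eval_word_le_long w p : w <> [] -> 3 <= length p -> incl p w ->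
  eval_word w ≼ eval_word p.
Proof.
  intros Hw Hp Hpw. set (w3 := w ++ w ++ w).
  assert (Hw3 : eval_word w3 = eval_word w ⊗ eval_word w ⊗ eval_word w).
  { unfold w3. rewrite !eval_word_app, smul_assoc
      by (assumption || (destruct w; [contradiction | discriminate])). reflexivity. }
  assert (Hlen : 3 <= length w3).
  { unfold w3. rewrite !length_app. destruct w; [contradiction | simpl; lia]. }
  eapply ai_le_trans; [apply sigma_le_cube|]. rewrite <- Hw3.
  eapply ai_le_trans; [apply eval_word_le_app; [lia|]|].
  { intros n Hn. apply in_or_app. left. apply Hpw, Hn. }
  rewrite eval_word_app, sigma_mulC
    by (destruct p, w3; simpl in *; (lia || discriminate)).
  apply eval_word_long_mul, Hp.
Qed.

Lemma eval_word_le_pair w x y : w <> [] -> In x w -> In y w ->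
  eval_word w ≼ v x ⊕ v x ⊗ v y.
Proof.
  intros Hw Hx Hy. eapply ai_le_trans.
  - apply (eval_word_le_long w [x; x; y]); [assumption | simpl; lia|].
    intros n [<-|[<-|[<-|[]]]]; assumption.
  - rewrite sigma_absorb. simpl. rewrite smul_assoc. apply ai_le_addr.
Qed.

End Words.
End SigmaLaws.

(* The patterns by which a polynomial [U] dominates a word [m] in every model
   of [Sigma]; they are also the only ways [U] can dominate [m] in S_(4,430). *)
Inductive covered (U : list word) : word -> Prop :=
  | covered_mem m : In m U -> covered U m
  | covered_comm a b : In [b; a] U -> covered U [a; b]
  | covered_long m p : In p U -> 3 <= length p -> incl p m -> covered U m
  | covered_pair m x y : In [x] U -> In [x; y] U \/ In [y; x] U ->
      In x m -> In y m -> covered U m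
  | covered_squares a b : In [a; a] U -> In [b; b] U -> covered U [a; b].

Lemma covered_le (A : aisemiring) (v : nat -> A) U m : Sigma A -> m <> [] ->
  covered U m -> eval_word A v m ≼ eval_poly A v U.
Proof.
  intros HS Hm Hcov.
  assert (Hle2 : forall p q, In p U -> In q U ->
            eval_word A v p ⊕ eval_word A v q ≼ eval_poly A v U).
  { intros p q Hp Hq. apply ai_le_join; apply eval_poly_ge; assumption. }
  destruct Hcov as [m Hm'|a b Hba|m p Hp Hlen Hpm|m x y Hx Hxy Hxm Hym|a b Ha Hb].
  - apply eval_poly_ge, Hm'.
  - simpl. rewrite sigma_mulC by exact HS. apply (eval_poly_ge _ _ _ _ Hba).
  - eapply ai_le_trans; [apply eval_word_le_long; eassumption|].
    apply eval_poly_ge, Hp.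
  - eapply ai_le_trans; [apply (eval_word_le_pair _ HS v m x y); assumption|].
    destruct Hxy as [Hxy|Hyx]; [apply (Hle2 _ _ Hx Hxy)|].
    rewrite sigma_mulC by exact HS. apply (Hle2 _ _ Hx Hyx).
  - eapply ai_le_trans; [apply (sigma_le_mul_squares _ HS)|].
    apply (Hle2 _ _ Ha Hb).
Qed.

Local Notation S := S4_430.

Definition S_dominated (U : list word) (m : word) : Prop :=
  forall phi : nat -> E4, ai_le S (eval_word S phi m) (eval_poly S phi U).

Lemma eval_word_S_zero (phi : nat -> E4) q n : In n q -> phi n = e2 ->
  eval_word S phi q = e2.
Proof.
  intros Hn Hphi. induction q as [|k q IH]; [destruct Hn|].
  destruct q as [|j q].
  - destruct Hn as [<-|[]]. exact Hphi.
  - rewrite eval_word_cons by discriminate. destruct Hn as [<-|Hn].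
    + rewrite Hphi. reflexivity.
    + rewrite IH by exact Hn. destruct (phi k); reflexivity.
Qed.

Lemma eval_word_S_neq_zero (phi : nat -> E4) q : q <> [] ->
  (forall n, In n q -> phi n <> e2) -> eval_word S phi q <> e2.
Proof.
  induction q as [|n q IH]; intros Hq Hphi; [contradiction|].
  destruct q as [|k q]; [apply Hphi; left; reflexivity|].
  rewrite eval_word_cons by discriminate.
  assert (Hn : phi n <> e2) by (apply Hphi; left; reflexivity).
  assert (Hk : eval_word S phi (k :: q) <> e2).
  { apply IH; [discriminate | intros j Hj; apply Hphi; right; exact Hj]. }
  revert Hn Hk. simpl sadd. destruct (phi n), (eval_word S phi (k :: q)); easy.
Qed.

Lemma eval_word_S_long (phi : nat -> E4) q : 3 <= length q ->
  (forall n, In n q -> phi n <> e2) -> eval_word S phi q = e1.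
Proof.
  destruct q as [|a [|b [|c q]]]; simpl length; intros Hq Hphi; try lia.
  assert (Ha : phi a <> e2) by (apply Hphi; left; reflexivity).
  assert (Hb : phi b <> e2) by (apply Hphi; right; left; reflexivity).
  assert (Hc : eval_word S phi (c :: q) <> e2).
  { apply eval_word_S_neq_zero; [discriminate|].
    intros n Hn; apply Hphi; right; right; exact Hn. }
  rewrite !eval_word_cons by discriminate.
  revert Ha Hb Hc. simpl sadd. destruct (phi a), (phi b), (eval_word S phi (c :: q)); easy.
Qed.

Definition support_val (m : word) (f : nat -> E4) (n : nat) : E4 :=
  if in_dec Nat.eq_dec n m then f n else e2.

Lemma support_val_in m f n : In n m -> support_val m f n = f n.
Proof. unfold support_val. destruct in_dec; [reflexivity | contradiction]. Qed.

Section Separation.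
Variable U : list word.
Hypothesis U_neq_nil : U <> [].
Hypothesis U_words : forall q, In q U -> q <> [].

Lemma S_witness m f c :
  S_dominated U m -> ~ ai_le S (eval_word S (support_val m f) m) c ->
  covered U m \/
  (exists n, In [n] U /\ In n m /\ ~ ai_le S (f n) c) \/
  (exists n k, In [n; k] U /\ In n m /\ In k m /\ ~ ai_le S (mul4 (f n) (f k)) c).
Proof.
  intros Hdom Hc. set (phi := support_val m f) in *.
  destruct (classic (exists q, In q U /\ ~ ai_le S (eval_word S phi q) c))
    as [[q [HqU Hq]]|Hnone].
  - assert (Hqm : incl q m).
    { intros n Hn. destruct (in_dec Nat.eq_dec n m) as [|Hnm]; [assumption|].
      exfalso; apply Hq. rewrite (eval_word_S_zero phi q n Hn).
      - destruct c; reflexivity.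
      - unfold phi, support_val. destruct in_dec; [contradiction | reflexivity]. }
    destruct q as [|n [|k [|j q]]].
    + exfalso; exact (U_words _ HqU eq_refl).
    + right; left. exists n. simpl in Hq. unfold phi in Hq.
      rewrite support_val_in in Hq by (apply Hqm; left; reflexivity). auto with datatypes.
    + right; right. exists n, k. simpl in Hq. unfold phi in Hq.
      rewrite !support_val_in in Hq by (apply Hqm; simpl; auto).
      repeat split; auto with datatypes.
    + left. apply (covered_long _ _ _ HqU); [simpl; lia | exact Hqm].
  - exfalso. apply Hc. eapply ai_le_trans; [apply Hdom|].
    apply eval_poly_le; [exact U_neq_nil|]. intros q Hq.
    apply NNPP. intros Hqc. apply Hnone. exists q. auto.
Qed.

Definition mark_singletons (n : nat) : E4 :=
  if in_dec (list_eq_dec Nat.eq_dec) [n] U then e3 else e4.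

Lemma covered_of_marked m : S_dominated U m ->
  ~ ai_le S (eval_word S (support_val m mark_singletons) m) e3 -> covered U m.
Proof.
  intros Hdom Hm.
  destruct (S_witness m _ _ Hdom Hm)
    as [|[[n (Hn & _ & Hf)]|[n [k (Hnk & Hnm & Hkm & Hf)]]]]; [assumption| |].
  - exfalso. apply Hf. unfold mark_singletons.
    destruct in_dec; [reflexivity | contradiction].
  - unfold mark_singletons in Hf.
    destruct (in_dec _ [n] U) as [Hn|Hn]; [now apply (covered_pair _ _ n k); auto|].
    destruct (in_dec _ [k] U) as [Hk|Hk]; [now apply (covered_pair _ _ k n); auto|].
    exfalso; apply Hf; reflexivity.
Qed.

Section TwoLetters.
Variables a b : nat.
Hypothesis a_notin : ~ In [a] U.
Hypothesis b_notin : ~ In [b] U.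
Hypothesis ab_notin : ~ In [a; b] U.
Hypothesis ba_notin : ~ In [b; a] U.
Hypothesis ab_dominated : S_dominated U [a; b].

Lemma covered_two_of_square z : z = a \/ z = b -> In [z; z] U -> covered U [a; b].
Proof.
  intros Hz Hzz.
  assert (Hab : a <> b) by (intros <-; destruct Hz as [<-| <-]; contradiction).
  set (f := fun n => if Nat.eq_dec n z then e4 else e3).
  destruct (S_witness [a; b] f e3 ab_dominated)
    as [|[[n (Hn & Hnm & _)]|[n [k (Hnk & Hnm & Hkm & Hf)]]]]; [|assumption| |].
  - simpl. rewrite !support_val_in by (simpl; auto). unfold f.
    destruct Hz as [<-| <-]; repeat destruct Nat.eq_dec; try congruence; discriminate.
  - destruct Hnm as [<-|[<-|[]]]; contradiction.
  - unfold f in Hf.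
    destruct Hnm as [<-|[<-|[]]], Hkm as [<-|[<-|[]]], Hz as [<-| <-];
      try contradiction; repeat destruct Nat.eq_dec; try congruence;
      try (exfalso; apply Hf; reflexivity); now apply covered_squares.
Qed.

Lemma covered_two_of_no_square : ~ In [a; a] U -> ~ In [b; b] U -> covered U [a; b].
Proof.
  intros Haa Hbb.
  destruct (S_witness [a; b] (fun _ => e4) e4 ab_dominated)
    as [|[[n (_ & _ & Hf)]|[n [k (Hnk & Hnm & Hkm & _)]]]]; [|assumption| |].
  - simpl. rewrite !support_val_in by (simpl; auto). discriminate.
  - exfalso; apply Hf; reflexivity.
  - destruct Hnm as [<-|[<-|[]]], Hkm as [<-|[<-|[]]]; contradiction.
Qed.

End TwoLetters.

Lemma covered_of_S_dominated m : m <> [] -> S_dominated U m -> covered U m.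
Proof.
  intros Hm Hdom.
  destruct (classic (In m U)) as [|HmU]; [now apply covered_mem|].
  assert (Hmark := covered_of_marked m Hdom).
  assert (Hmark_in : forall n, In n m -> support_val m mark_singletons n <> e2).
  { intros n Hn. rewrite support_val_in by exact Hn.
    unfold mark_singletons. destruct in_dec; discriminate. }
  destruct m as [|a [|b [|c r]]]; [contradiction| | |].
  - apply Hmark. simpl. rewrite support_val_in by (left; reflexivity).
    unfold mark_singletons. destruct in_dec; [contradiction | discriminate].
  - destruct (classic (In [a] U \/ In [b] U)) as [Hab|Hab].
    + apply Hmark. simpl. rewrite !support_val_in by (simpl; auto).
      unfold mark_singletons.
      destruct Hab as [Ha|Hb]; [destruct (in_dec _ [a] U)|destruct (in_dec _ [b] U)];
        try contradiction; destruct in_dec; discriminate.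
    + destruct (classic (In [b; a] U)) as [|Hba]; [now apply covered_comm|].
      assert (Ha : ~ In [a] U) by tauto. assert (Hb : ~ In [b] U) by tauto.
      destruct (classic (In [a; a] U)) as [Haa|Haa];
        [apply (covered_two_of_square a b) with (z := a); auto|].
      destruct (classic (In [b; b] U)) as [Hbb|Hbb];
        [apply (covered_two_of_square a b) with (z := b); auto|].
      apply covered_two_of_no_square; assumption.
  - apply Hmark. rewrite eval_word_S_long; [discriminate | simpl; lia | exact Hmark_in].
Qed.

End Separation.

Lemma Sigma_S4_430 : Sigma S4_430.
Proof.
  unfold Sigma, holds, x, y.
  repeat split; intros val; simpl;
    destruct (val 0), (val 1); try reflexivity; destruct (val 2), (val 3); reflexivity.
Qed.

Lemma le_of_holds_S4_430 (A : aisemiring) u v : Sigma A -> holds S4_430 u v ->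
  forall val, eval A val v ≼ eval A val u.
Proof.
  intros HS Huv val. rewrite !eval_monomials.
  apply eval_poly_le; [apply monomials_neq_nil|]. intros m Hm.
  apply covered_le; [exact HS | exact (monomials_word_neq_nil _ _ Hm)|].
  apply covered_of_S_dominated;
    [apply monomials_neq_nil | apply monomials_word_neq_nil
    | exact (monomials_word_neq_nil _ _ Hm) |].
  intros phi. rewrite <- eval_monomials, (Huv phi), eval_monomials.
  apply eval_poly_ge, Hm.
Qed.

Theorem proposition7p8 :
  forall A : aisemiring, in_variety_gen S4_430 A <-> Sigma A.
Proof.
  intros A. split.
  - intros HV. destruct Sigma_S4_430 as (H1 & H2 & H3 & H4 & H5 & H6).
    repeat split; apply HV; assumption.
  - intros HS u v Huv val. apply ai_le_antisym; apply le_of_holds_S4_430; try assumption.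
    intros phi. symmetry. apply Huv.
Qed.
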